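(* Consider the chain pendulum on a cart described in the context, and an equilibrium specified by $s=(s_1,\dots,s_n)\in\{1,-1\}^n$, namely $q_i=s_ie_3$, $\omega_i=0$ for all $i$, and $x=0$, $\dot x=0$. Parametrize perturbations by $x=\epsilon\,\delta x$, $q_i=\exp(\epsilon\hat\xi_i)s_ie_3$, $\omega_i=\epsilon\,\delta\omega_i$ with $\delta x\in\mathbb{R}^2$, $\xi_i,\delta\omega_i\in\mathbb{R}^3$, $\xi_i\cdot e_3=\delta\omega_i\cdot e_3=0$, and set $\mathbf{x}_q=[C^T\xi_1;\dots;C^T\xi_n]\in\mathbb{R}^{2n}$, $\mathbf{x}=[\delta x;\mathbf{x}_q]\in\mathbb{R}^{2n+2}$. Then the linearization of the equations of motion about this equilibrium is \[ \mathbf{M}\ddot{\mathbf{x}}+\mathbf{G}\mathbf{x}=\mathbf{B}u,\qquad \mathbf{M}=\begin{bmatrix}\mathbf{M}_{xx}&\mathbf{M}_{xq}\\ \mathbf{M}_{qx}&\mathbf{M}_{qq}\end{bmatrix},\quad \mathbf{G}=\begin{bmatrix}0_{2}&0_{2\times2n}\\0_{2n\times2}&\mathbf{G}_{qq}\end{bmatrix},\quad \mathbf{B}=\begin{bmatrix}I_2\\0_{2n\times2}\end{bmatrix}, \] where $\mathbf{M}_{xx}=M_{00}I_2$, $\mathbf{M}_{xq}=\big[-s_1M_{01}\hat e_3C,\ -s_2M_{02}\hat e_3C,\ \dots,\ -s_nM_{0n}\hat e_3C\big]\in\mathbb{R}^{2\times2n}$, $\mathbf{M}_{qx}=\mathbf{M}_{xq}^T$,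 $\mathbf{M}_{qq}\in\mathbb{R}^{2n\times2n}$ is the block matrix whose $(i,j)$ $2\times2$ block is $s_is_jM_{ij}I_2$ (so the diagonal blocks are $M_{ii}I_2$), and $\mathbf{G}_{qq}=\mathrm{diag}\big[s_1\big(\sum_{a=1}^n m_a\big)g\,l_1I_2,\ \dots,\ s_i\big(\sum_{a=i}^n m_a\big)g\,l_iI_2,\ \dots,\ s_nm_ng\,l_nI_2\big]$.
   Context: Let $n\ge1$. $\mathsf{S}^2=\{q\in\mathbb{R}^3:\|q\|=1\}$. Let $e_1,e_2,e_3$ be the standard basis of $\mathbb{R}^3$, with $e_3$ the direction of gravity, $g>0$ the gravitational acceleration, and $C=[e_1,e_2]\in\mathbb{R}^{3\times2}$. For $y\in\mathbb{R}^3$, $\hat y$ denotes the $3\times3$ skew-symmetric matrix with $\hat y z=y\times z$; $\exp$ is the matrix exponential. A cart of mass $m>0$ with position $x\in\mathbb{R}^2$ moves in a horizontal plane under a control force $u\in\mathbb{R}^2$; a serial chain of $n$ links with spherical joints is attached, link $i$ having length $l_i>0$, direction $q_i\in\mathsf{S}^2$, point mass $m_i>0$ at its outboard end, and angular velocity $\omega_i\in\mathbb{R}^3$ with $\omega_i\cdot q_i=0$. Define $M_{00}=m+\sum_{i=1}^n m_i$, $M_{0i}=\big(\sum_{a=i}^n m_a\big)l_iC^T\in\mathbb{R}^{2\times3}$, $M_{i0}=M_{0i}^T$, $M_{ij}=\big(\sum_{a=\max\{i,j\}}^n m_a\big)l_il_j$. The equations of motion (the Euler–Lagrange equations for the Lagrangian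 $L=\tfrac12M_{00}\|\dot x\|^2+\dot x\cdot\sum_iM_{0i}\dot q_i+\tfrac12\sum_{i,j}M_{ij}\dot q_i\cdot\dot q_j+\sum_i(\sum_{a=i}^n m_a)g\,l_i\,e_3\cdot q_i$ with force $u$ on the cart) are $M_{00}\ddot x-\sum_{j=1}^n M_{0j}\hat q_j\dot\omega_j=\sum_{j=1}^n M_{0j}\|\omega_j\|^2q_j+u$; for $i=1,\dots,n$: $\hat q_iM_{i0}\ddot x+M_{ii}\dot\omega_i-\sum_{j\neq i}M_{ij}\hat q_i\hat q_j\dot\omega_j=\sum_{j\neq i}M_{ij}\|\omega_j\|^2\hat q_iq_j+\big(\sum_{a=i}^n m_a\big)g\,l_i\,\hat q_ie_3$; and $\dot q_i=\omega_i\times q_i$. *)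

From HB Require Import structures.
From mathcomp Require Import all_boot all_order all_algebra.
From mathcomp Require Import all_classical all_reals all_analysis.
Set Implicit Arguments. Unset Strict Implicit. Unset Printing Implicit Defensive.
Import Order.TTheory GRing.Theory Num.Theory.
Import numFieldNormedType.Exports.
Local Open Scope ring_scope.

Section ChainPendulum.
Variable R : realType.

Definition e3 : 'cV[R]_3 := \col_(i < 3) (i == 2%N :> nat)%:R.
Definition Cmx : 'M[R]_(3, 2) := \matrix_(i < 3, j < 2) (i == j :> nat)%:R.

(* hat map: hat y z = y \times z *)
Definition hat (y : 'cV[R]_3) : 'M[R]_3 :=
  let a := y 0 0 in let b := y 1 0 in let c := y 2%:R 0 in
  \matrix_(i < 3, j < 3)
    nth 0 (nth [::] [:: [:: 0; - c; b]; [:: c; 0; - a]; [:: - b; a; 0]] i) j.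

Definition dotv (y z : 'cV[R]_3) : R := (y^T *m z) 0 0.
Definition sqnorm (y : 'cV[R]_3) : R := dotv y y.

Definition expm (A : 'M[R]_3) : 'M[R]_3 :=
  limn (series (fun k : nat => (k`!%:R)^-1 *: A ^+ k)).

Variables (n : nat) (m g : R) (ms l : 'I_n -> R).

(* sum_{a = i}^{n} m_a  (0-based indices) *)
Definition msum (i : 'I_n) : R := \sum_(a < n | (i <= a)%N) ms a.
Definition M00 : R := m + \sum_(a < n) ms a.
Definition M0 (i : 'I_n) : 'M[R]_(2, 3) := (msum i * l i) *: Cmx^T.
Definition Mi0 (i : 'I_n) : 'M[R]_(3, 2) := (M0 i)^T.
Definition Mij (i j : 'I_n) : R :=
  (\sum_(a < n | (i <= a)%N && (j <= a)%N) ms a) * l i * l j.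

(* residual (LHS - RHS) of the cart equation of motion *)
Definition cart_res (xdd : 'cV[R]_2) (q w wd : 'I_n -> 'cV[R]_3) (u : 'cV[R]_2)
  : 'cV[R]_2 :=
  M00 *: xdd - \sum_(j < n) (M0 j *m hat (q j) *m wd j)
  - (\sum_(j < n) (sqnorm (w j) *: (M0 j *m q j)) + u).

(* residual (LHS - RHS) of the i-th link equation of motion *)
Definition rot_res (i : 'I_n) (xdd : 'cV[R]_2) (q w wd : 'I_n -> 'cV[R]_3)
  : 'cV[R]_3 :=
  hat (q i) *m Mi0 i *m xdd + Mij i i *: wd i
  - \sum_(j < n | j != i) (Mij i j *: (hat (q i) *m hat (q j) *m wd j))
  - (\sum_(j < n | j != i) ((Mij i j * sqnorm (w j)) *: (hat (q i) *m q j))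
     + (msum i * g * l i) *: (hat (q i) *m e3)).

Variables (s : 'I_n -> R) (dx : R -> 'cV[R]_2) (xi dw : 'I_n -> R -> 'cV[R]_3)
  (du : R -> 'cV[R]_2).

Definition qpert (i : 'I_n) (eps t : R) : 'cV[R]_3 :=
  expm (eps *: hat (xi i t)) *m (s i *: e3).

(* first-order (in eps) terms of the equations of motion along the
   perturbation x = eps dx, q_i = qpert, omega_i = eps dw_i, u = eps du *)
Definition lin_cart (t : R) : 'cV[R]_2 :=
  derive1 (fun eps : R =>
    cart_res (eps *: derive1 (derive1 dx) t) (fun i => qpert i eps t)
      (fun i => eps *: dw i t) (fun i => eps *: derive1 (dw i) t) (eps *: du t)) 0.

Definition lin_rot (i : 'I_n) (t : R) : 'cV[R]_3 :=
  derive1 (fun eps : R =>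
    rot_res i (eps *: derive1 (derive1 dx) t) (fun j => qpert j eps t)
      (fun j => eps *: dw j t) (fun j => eps *: derive1 (dw j) t)) 0.

(* linearized kinematics  d/dt (delta q_i) = delta (omega_i x q_i) *)
Definition lin_kin (i : 'I_n) (t : R) : Prop :=
  derive1 (fun t' => derive1 (fun eps => qpert i eps t') 0) t =
  derive1 (fun eps => hat (eps *: dw i t) *m qpert i eps t) 0.

Definition bx (t : R) : 'cV[R]_(2 + \sum_(i < n) 2) :=
  col_mx (dx t) (\mxcol_(i < n) (Cmx^T *m xi i t)).

Definition Mxx : 'M[R]_2 := M00%:M.
Definition Mxq : 'M[R]_(2, \sum_(i < n) 2) :=
  \mxrow_(j < n) (- (s j) *: (M0 j *m hat e3 *m Cmx)).
Definition Mqx : 'M[R]_(\sum_(i < n) 2, 2) := Mxq^T.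
Definition Mqq : 'M[R]_(\sum_(i < n) 2) :=
  \mxblock_(i < n, j < n) ((s i * s j * Mij i j)%:M : 'M[R]_2).
Definition Mbig : 'M[R]_(2 + \sum_(i < n) 2) := block_mx Mxx Mxq Mqx Mqq.
Definition Gqq : 'M[R]_(\sum_(i < n) 2) :=
  \mxdiag_(i < n) ((s i * msum i * g * l i)%:M : 'M[R]_2).
Definition Gbig : 'M[R]_(2 + \sum_(i < n) 2) := block_mx 0 0 0 Gqq.
Definition Bbig : 'M[R]_(2 + \sum_(i < n) 2, 2) := col_mx 1%:M 0.

End ChainPendulum.

From Pilot Require Import Defs.
From HB Require Import structures.
From mathcomp Require Import all_boot all_order all_algebra.
From mathcomp Require Import all_classical all_reals all_analysis.
From mathcomp Require Import ring.
Import Order.TTheory GRing.Theory Num.Theory.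
Import numFieldNormedType.Exports.
Local Open Scope ring_scope.
Set Implicit Arguments. Unset Strict Implicit. Unset Printing Implicit Defensive.

(* Linearizing means differentiating the residuals of the equations of motion
   at eps = 0 along the perturbation.  The one transcendental ingredient is
   exp (eps hat xi): since (hat xi)^3 = - |xi|^2 hat xi, Rodrigues' formula gives
   it in closed form, so q_i has derivative hat xi_i (s_i e3) at eps = 0, while
   every |omega|^2 term is quadratic in eps.  The linearized kinematics force
   delta omega_i = xi_i', both vectors being horizontal.  At the equilibrium,
   hat (s_i e3) hat (s_j e3) and the gravity term act on horizontal vectors as
   -s_i s_j and -s_i, and C C^T is the identity on them; hence C^T applied to the
   i-th link equation is the i-th block row of M xdd + G x = B u, and C is
   injective. *)

Section MatrixDerive.
Context {R : realFieldType} {V : normedModType R}.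
Variables (x v : V).

Lemma is_derive_mxP p q (M : V -> 'M[R]_(p, q)) (D : 'M[R]_(p, q)) :
  is_derive x v M D <-> forall i j, is_derive x v (fun e => M e i j) (D i j).
Proof.
split=> [[dM dMD] i j|dMij].
  have /derivable_mxP/(_ i j) dij := dM.
  by apply: DeriveDef => //; rewrite -dMD derive_mx // mxE.
have dM : derivable M x v by apply/derivable_mxP => i j; case: (dMij i j).
apply: DeriveDef => //; rewrite derive_mx //; apply/matrixP => i j.
by rewrite mxE; case: (dMij i j).
Qed.

Lemma is_derive_mulmx p q r (F : V -> 'M[R]_(p, q)) (G : V -> 'M[R]_(q, r)) dF dG :
  is_derive x v F dF -> is_derive x v G dG ->
  is_derive x v (fun e => F e *m G e) (dF *m G x + F x *m dG).
Proof.
move=> /is_derive_mxP dF' /is_derive_mxP dG'; apply/is_derive_mxP => i j.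
rewrite !mxE -big_split /=.
have -> : (fun e => (F e *m G e) i j) =
    \sum_(k < q) ((fun e => F e i k) * (fun e => G e k j)).
  by apply/funext => e; rewrite mxE fct_sumE.
apply: is_derive_sum => k; apply: is_derive_eq (is_deriveM (dF' i k) (dG' k j)) _.
by rewrite /GRing.scale /= addrC mulrC [G x k j * _]mulrC.
Qed.

Lemma is_derive_scalemx p q (a : V -> R) (F : V -> 'M[R]_(p, q)) da dF :
  is_derive x v a da -> is_derive x v F dF ->
  is_derive x v (fun e => a e *: F e) (da *: F x + a x *: dF).
Proof.
move=> da' /is_derive_mxP dF'; apply/is_derive_mxP => i j.
have -> : (fun e => (a e *: F e) i j) = a * (fun e => F e i j).
  by apply/funext => e; rewrite mxE.
rewrite !mxE; apply: is_derive_eq (is_deriveM da' (dF' i j)) _.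
by rewrite /GRing.scale /= addrC mulrC [F x i j * _]mulrC.
Qed.

Lemma is_derive_linear p q p' q' (L : {linear 'M[R]_(p, q) -> 'M[R]_(p', q')})
    (F : V -> 'M[R]_(p, q)) dF :
  is_derive x v F dF -> is_derive x v (fun e => L (F e)) (L dF).
Proof.
move=> /is_derive_mxP dF'; apply/is_derive_mxP => i j.
have LE (M : 'M[R]_(p, q)) :
    L M i j = \sum_(k < p) \sum_(l < q) M k l * L (delta_mx k l) i j.
  rewrite {1}(matrix_sum_delta M) !linear_sum summxE; apply: eq_bigr => k _.
  by rewrite linear_sum summxE; apply: eq_bigr => l _; rewrite linearZ mxE.
have -> : (fun e => L (F e) i j) =
    \sum_(k < p) \sum_(l < q) ((fun e => F e k l) * cst (L (delta_mx k l) i j)).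
  by apply/funext => e; rewrite LE fct_sumE; apply: eq_bigr => k _; rewrite fct_sumE.
rewrite LE; apply: is_derive_sum => k; apply: is_derive_sum => l.
apply: is_derive_eq (is_deriveM (dF' k l) (is_derive_cst _ x v)) _.
by rewrite /GRing.scale /= mulr0 add0r mulrC.
Qed.

Lemma is_derive_scaler p q (A : 'M[R]_(p, q)) (a : V -> R) da :
  is_derive x v a da -> is_derive x v (fun e => a e *: A) (da *: A).
Proof.
move=> da'; apply: is_derive_eq (is_derive_scalemx da' (is_derive_cst A x v)) _.
by rewrite scaler0 addr0.
Qed.

Lemma is_derive_col_mx p1 p2 q (F1 : V -> 'M[R]_(p1, q)) (F2 : V -> 'M[R]_(p2, q))
    dF1 dF2 :
  is_derive x v F1 dF1 -> is_derive x v F2 dF2 ->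
  is_derive x v (fun e => col_mx (F1 e) (F2 e)) (col_mx dF1 dF2).
Proof.
move=> /is_derive_mxP dF1' /is_derive_mxP dF2'; apply/is_derive_mxP => i j.
have -> : (fun e => col_mx (F1 e) (F2 e) i j) =
    fun e => match fintype.split i with inl k => F1 e k j | inr k => F2 e k j end.
  by apply/funext => e; rewrite mxE; case: fintype.split.
by rewrite mxE; case: fintype.split.
Qed.

Lemma is_derive_mxcol k (p_ : 'I_k -> nat) q (F : forall i, V -> 'M[R]_(p_ i, q))
    (dF : forall i, 'M[R]_(p_ i, q)) :
  (forall i, is_derive x v (F i) (dF i)) ->
  is_derive x v (fun e => \mxcol_i F i e) (\mxcol_i dF i).
Proof.
move=> dF'; apply/is_derive_mxP => i j.
have -> : (fun e => (\mxcol_i F i e) i j) =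
    fun e => F (tagnat.sig1 i) e (tagnat.sig2 i) j.
  by apply/funext => e; rewrite mxE.
by rewrite mxE; move/is_derive_mxP: (dF' (tagnat.sig1 i)); apply.
Qed.

Lemma is_derive_sum_cond k (P : pred 'I_k) (W : normedModType R)
    (F : 'I_k -> V -> W) (dF : 'I_k -> W) :
  (forall i, P i -> is_derive x v (F i) (dF i)) ->
  is_derive x v (fun e => \sum_(i < k | P i) F i e) (\sum_(i < k | P i) dF i).
Proof.
move=> dF'; rewrite big_mkcond.
have -> : (fun e => \sum_(i < k | P i) F i e) =
    \sum_(i < k) (fun e => if P i then F i e else 0).
  by apply/funext => e; rewrite fct_sumE big_mkcond.
by apply: is_derive_sum => i; case: ifP => [/dF'|_] //; exact: is_derive_cst.
Qed.

End MatrixDerive.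

Lemma is_derive_scale (R : realFieldType) p q (A : 'M[R]_(p, q)) (x : R) :
  is_derive x 1 (fun e => e *: A) A.
Proof.
by apply: is_derive_eq (is_derive_scaler A (is_derive_id x 1)) _; rewrite scale1r.
Qed.

Lemma derive1_mx_entry_eq0 (R : realFieldType) p q (F : R -> 'M[R]_(p, q)) i j t :
  derivable F t 1 -> (forall e, F e i j = 0) -> derive1 F t i j = 0.
Proof.
move=> dF Fij0; rewrite derive1E derive_mx // mxE.
by rewrite (_ : (fun e => F e i j) = cst 0) ?derive_cst //; apply/funext.
Qed.

Section Rodrigues.
Local Open Scope classical_set_scope.
Variable R : realType.
Variables (H : 'M[R]_3) (N : R).
(* [H_eq0] rules out the nilpotent case, where the closed form below would
   divide by N = 0. *)
Hypotheses (N_ge0 : 0 <= N) (H_cube : H ^+ 3 = - N *: H) (H_eq0 : N = 0 -> H = 0).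

Lemma cubic_expr j :
  H ^+ j.*2.+1 = (- N) ^+ j *: H /\ H ^+ j.*2.+2 = (- N) ^+ j *: H ^+ 2.
Proof.
elim: j => [|j [IHodd _]]; first by rewrite !expr0 !scale1r.
have Hodd : H ^+ j.+1.*2.+1 = (- N) ^+ j.+1 *: H.
  rewrite doubleS (_ : j.*2.+3 = j.*2.+1 + 2)%N; last by rewrite addn2.
  by rewrite exprD IHodd -scalerAl -exprS H_cube scalerA -exprSr.
by split => //; rewrite doubleS exprSr Hodd -scalerAl -expr2.
Qed.

Let r := Num.sqrt N.

Lemma expm_series_term (eps : R) k :
  (k`!%:R)^-1 *: (eps *: H) ^+ k =
  (sin_coeff (eps * r) k / r) *: H
  + (((k == 0)%N%:R - cos_coeff (eps * r) k) / N) *: H ^+ 2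
  + (k == 0)%N%:R *: 1.
Proof.
case: k => [|k].
  rewrite /sin_coeff /cos_coeff /= !expr0 !mul1r !mulr1 invr1 !mul0r.
  by rewrite !scale0r subrr mul0r scale0r !add0r !scale1r.
have [N0|N_neq0] := eqVneq N 0.
  rewrite /r N0 H_eq0 // sqrtr0 invr0 !mulr0 scaler0 expr0n /= scaler0 !scale0r.
  by rewrite !addr0.
have r_neq0 : r != 0 by rewrite /r sqrtr_eq0 -ltNge lt_neqAle eq_sym N_neq0.
have rr : r ^+ 2 = N by rewrite /r sqr_sqrtr.
have [k_odd|k_even] := boolP (odd k).
- have -> : k.+1 = (k./2).*2.+2 by rewrite -[in LHS](odd_double_half k) k_odd.
  set j := k./2; rewrite exprZn; have [_ ->] := cubic_expr j.
  rewrite /sin_coeff /cos_coeff /= odd_double /= !mul0r scale0r add0r scale0r addr0.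
  rewrite !scalerA -exprnP doubleK; congr (_ *: _).
  have fj : ((j.*2.+2)`!)%:R != 0 :> R by rewrite pnatr_eq0 -lt0n fact_gt0.
  rewrite exprMn (_ : r ^+ j.*2.+2 = N ^+ j.+1); last first.
    by rewrite -mul2n -add2n -mulnS exprM rr.
  by rewrite exprNn !exprS; field; rewrite fj N_neq0.
- have -> : k.+1 = (k./2).*2.+1 by rewrite -[in LHS](odd_double_half k) (negbTE k_even).
  set j := k./2; rewrite exprZn; have [-> _] := cubic_expr j.
  rewrite /sin_coeff /cos_coeff /= odd_double /= !mul0r subrr mul0r !scale0r.
  rewrite !addr0 !scalerA doubleK; congr (_ *: _).
  have fj : ((j.*2.+1)`!)%:R != 0 :> R by rewrite pnatr_eq0 -lt0n fact_gt0.
  rewrite exprMn (_ : r ^+ j.*2.+1 = N ^+ j * r); last first.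
    by rewrite exprS -mul2n exprM rr mulrC.
  by rewrite exprNn expr1n mulr1 [(- N) ^+ j]exprNn; field; rewrite fj r_neq0.
Qed.

Lemma series_kronecker0 K : series (fun k : nat => (k == 0)%N%:R : R) K.+1 = 1.
Proof.
elim: K => [|K IH]; first by rewrite seriesS /series /= big_geq // addr0.
by rewrite seriesS IH /= add0r.
Qed.

Lemma expm_rodrigues (eps : R) :
  expm (eps *: H) = 1 + (sin (eps * r) / r) *: H + ((1 - cos (eps * r)) / N) *: H ^+ 2.
Proof.
rewrite /expm; apply: cvg_lim => //.
set x := eps * r; set d := fun k : nat => (k == 0)%N%:R : R.
have -> : series (fun k : nat => (k`!%:R)^-1 *: (eps *: H) ^+ k) =
    fun K => (series (sin_coeff x) K / r) *: H
      + ((series d K - series (cos_coeff x) K) / N) *: H ^+ 2 + series d K *: 1.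
  have scale3D (a b c a' b' c' : R) :
      a *: H + b *: H ^+ 2 + c *: 1 + (a' *: H + b' *: H ^+ 2 + c' *: 1) =
      (a + a') *: H + (b + b') *: H ^+ 2 + (c + c') *: 1.
    by rewrite addrACA [a *: H + _ + _]addrACA !scalerDl.
  apply/funext; elim=> [|K IH].
    by rewrite /series /= !big_geq // !mul0r subrr mul0r !scale0r !addr0.
  rewrite !seriesS IH expm_series_term scale3D.
  by congr (_ *: _ + _ *: _ + _ *: _); rewrite /d; ring.
have sin_cvg : series (sin_coeff x) @ \oo --> sin x.
  by rewrite unlock; exact: is_cvg_series_sin_coeff.
have cos_cvg : series (cos_coeff x) @ \oo --> cos x.
  by rewrite unlock; exact: is_cvg_series_cos_coeff.
have d_cvg : series d @ \oo --> (1 : R).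
  rewrite -cvg_shiftS; apply: cvg_near_cst; near=> K.
  by rewrite /= series_kronecker0.
have -> : 1 + (sin x / r) *: H + ((1 - cos x) / N) *: H ^+ 2 =
    (sin x / r) *: H + ((1 - cos x) / N) *: H ^+ 2 + 1 *: 1.
  by rewrite scale1r [RHS]addrC addrA.
apply: cvgD; last exact: cvgZr_tmp.
apply: cvgD; apply: cvgZr_tmp; first exact: cvgMr_tmp.
by apply: cvgMr_tmp; apply: cvgB.
Unshelve. all: by end_near.
Qed.

Lemma expm_scale0 : expm (0 *: H) = 1.
Proof. by rewrite expm_rodrigues !mul0r sin0 cos0 subrr !mul0r !scale0r !addr0. Qed.

Lemma is_derive_expm_scale0 : is_derive (0 : R) 1 (fun eps => expm (eps *: H)) H.
Proof.
have [N0|N_neq0] := eqVneq N 0.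
  rewrite H_eq0 //; under eq_fun do rewrite scaler0; exact: is_derive_cst.
have r_neq0 : r != 0 by rewrite /r sqrtr_eq0 -ltNge lt_neqAle eq_sym N_neq0.
have dlin : is_derive (0 : R) 1 (fun e => e * r) r.
  apply: is_derive_eq (is_deriveM (is_derive_id (0 : R) (1 : R))
    (is_derive_cst r (0 : R) (1 : R))) _.
  by rewrite /GRing.scale /= mulr0 add0r mulr1.
have dsin : is_derive (0 : R) 1 (fun e => sin (e * r) / r) 1.
  apply: is_derive_eq (is_deriveM
    (@is_derive1_comp _ sin _ 0 _ _ (is_derive_sin (0 * r)) dlin)
    (is_derive_cst r^-1 (0 : R) (1 : R))) _.
  by rewrite /GRing.scale /= mulr0 add0r mul0r cos0 mul1r mulVf.
have dcos : is_derive (0 : R) 1 (fun e => (1 - cos (e * r)) / N) 0.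
  apply: is_derive_eq (is_deriveM (is_deriveB (is_derive_cst (1 : R) (0 : R) (1 : R))
    (@is_derive1_comp _ cos _ 0 _ _ (is_derive_cos (0 * r)) dlin))
    (is_derive_cst N^-1 (0 : R) (1 : R))) _.
  by rewrite /GRing.scale /= mulr0 add0r mul0r sin0 oppr0 mul0r subr0 mulr0.
under eq_fun do rewrite expm_rodrigues.
apply: is_derive_eq (is_deriveD (is_deriveD (is_derive_cst (1 : 'M[R]_3) (0 : R) (1 : R))
  (is_derive_scaler H dsin)) (is_derive_scaler (H ^+ 2) dcos)) _.
by rewrite scale1r scale0r addr0 add0r.
Qed.

End Rodrigues.

Lemma ord3_lift1 : lift ord0 ord0 = 1 :> 'I_3. Proof. exact: val_inj. Qed.
Lemma ord3_lift2 : lift ord0 (lift ord0 ord0) = 2%:R :> 'I_3. Proof. exact: val_inj. Qed.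

Lemma ord3_ind (P : 'I_3 -> Prop) : P 0 -> P 1 -> P 2%:R -> forall i, P i.
Proof.
move=> P0 P1 P2 [[|[|[|i]]] lti] //.
- by rewrite (_ : Ordinal lti = 0) //; exact: val_inj.
- by rewrite (_ : Ordinal lti = 1) //; exact: val_inj.
- by rewrite (_ : Ordinal lti = 2%:R) //; exact: val_inj.
Qed.

Section Hat.
Variable R : realType.
Implicit Types (y z : 'cV[R]_3) (a b : R).

Definition skew a b c : 'M[R]_3 :=
  \matrix_(i < 3, j < 3)
    nth 0 (nth [::] [:: [:: 0; - c; b]; [:: c; 0; - a]; [:: - b; a; 0]] i) j.

Lemma hatE y : hat y = skew (y 0 0) (y 1 0) (y 2%:R 0).
Proof. by []. Qed.

Lemma dotvE y z : dotv y z = y 0 0 * z 0 0 + y 1 0 * z 1 0 + y 2%:R 0 * z 2%:R 0.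
Proof.
by rewrite /dotv !(mxE, big_ord_recl, big_ord0) ord3_lift1 ord3_lift2 addr0 addrA.
Qed.

Lemma dotv_e3 y : dotv y (e3 R) = y 2%:R 0.
Proof. by rewrite dotvE !mxE /= !mulr0 mulr1 !add0r. Qed.

Lemma sqnorm_ge0 y : 0 <= sqnorm y.
Proof. by rewrite /sqnorm dotvE -!expr2 !addr_ge0 ?sqr_ge0. Qed.

Lemma sqnormZ a y : sqnorm (a *: y) = a ^+ 2 * sqnorm y.
Proof. by rewrite /sqnorm !dotvE !mxE; ring. Qed.

Lemma hat_is_linear : linear (@hat R).
Proof.
move=> a y z; rewrite !hatE; apply/matrixP => i j; rewrite !mxE.
by case: i => [[|[|[|i]]] ?] //; case: j => [[|[|[|j]]] ?] //=; rewrite ?mxE; ring.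
Qed.

HB.instance Definition _ :=
  GRing.isLinear.Build R 'cV[R]_3 'M[R]_3 _ (@hat R) hat_is_linear.

Lemma skew_cube a b c : skew a b c ^+ 3 = - (a ^+ 2 + b ^+ 2 + c ^+ 2) *: skew a b c.
Proof.
rewrite !exprS expr0 mulr1 -!mulmxE; apply/matrixP => i j.
rewrite !(mxE, big_ord_recl, big_ord0) /=.
by case: i => [[|[|[|i]]] ?] //; case: j => [[|[|[|j]]] ?] //=; ring.
Qed.

Lemma hat_cube y : hat y ^+ 3 = - sqnorm y *: hat y.
Proof. by rewrite hatE skew_cube /sqnorm dotvE !expr2. Qed.

Lemma sqnorm_eq0 y : sqnorm y = 0 -> hat y = 0.
Proof.
rewrite /sqnorm dotvE -!expr2 hatE => /eqP.
rewrite paddr_eq0 ?addr_ge0 ?sqr_ge0 // paddr_eq0 ?sqr_ge0 // !sqrf_eq0.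
move=> /andP[/andP[/eqP -> /eqP ->] /eqP ->]; apply/matrixP => i j; rewrite !mxE.
by case: i => [[|[|[|i]]] ?] //; case: j => [[|[|[|j]]] ?] //=; rewrite ?oppr0.
Qed.

Lemma is_derive_sqnorm_scale0 y :
  is_derive (0 : R) 1 (fun e => sqnorm (e *: y)) 0.
Proof.
have -> : (fun e => sqnorm (e *: y)) = fun e => e * e * sqnorm y.
  by apply/funext => e; rewrite sqnormZ expr2.
apply: is_derive_eq (is_deriveM (is_deriveM (is_derive_id (0 : R) (1 : R))
  (is_derive_id (0 : R) (1 : R))) (is_derive_cst (sqnorm y) (0 : R) (1 : R))) _.
by rewrite /GRing.scale /= !(mulr0, mul0r, addr0).
Qed.

Lemma expm_hat0 y : expm (0 *: hat y) = 1.
Proof. exact: (expm_scale0 (sqnorm_ge0 y) (hat_cube y) (@sqnorm_eq0 y)). Qed.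

Lemma is_derive_expm_hat0 y :
  is_derive (0 : R) 1 (fun eps => expm (eps *: hat y)) (hat y).
Proof. exact: (is_derive_expm_scale0 (sqnorm_ge0 y) (hat_cube y) (@sqnorm_eq0 y)). Qed.

Lemma hat_e3_mul_hat_e3 a b z :
  z 2%:R 0 = 0 -> hat (a *: e3 R) *m hat (b *: e3 R) *m z = - (a * b) *: z.
Proof.
move=> z2; apply/matrixP => i j; rewrite (ord1 j) !hatE.
rewrite !(mxE, big_ord_recl, big_ord0) /= ?ord3_lift1 ?ord3_lift2.
by elim/ord3_ind: i => /=; rewrite ?mxE /= ?z2; ring.
Qed.

Lemma hat_mul_hat_e3 a z :
  z 2%:R 0 = 0 -> hat (hat z *m (a *: e3 R)) *m e3 R = - a *: z.
Proof.
move=> z2; apply/matrixP => i j; rewrite (ord1 j) !hatE.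
rewrite !(mxE, big_ord_recl, big_ord0) /= ?ord3_lift1 ?ord3_lift2.
by elim/ord3_ind: i => /=; rewrite ?mxE /= ?z2; ring.
Qed.

Lemma hat_mul_e3_eq0 z : hat z *m e3 R = 0 -> z 2%:R 0 = 0 -> z = 0.
Proof.
move=> /matrixP z_e3 z2; have /= := z_e3 0 0; have /= := z_e3 1 0.
rewrite hatE !(mxE, big_ord_recl, big_ord0) /= ?ord3_lift1 ?ord3_lift2 /=.
rewrite !(mulr0, mul0r, mulr1, add0r, addr0) => /eqP; rewrite oppr_eq0 => /eqP z0 z1.
apply/matrixP => i j; rewrite (ord1 j) mxE.
by elim/ord3_ind: i.
Qed.

Lemma trCmx_Cmx : (Cmx R)^T *m Cmx R = 1%:M.
Proof.
apply/matrixP => i j; rewrite !(mxE, big_ord_recl, big_ord0) /=.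
by case: i => [[|[|i]] ?] //; case: j => [[|[|j]] ?] //=; rewrite ?mxE /=; ring.
Qed.

Lemma Cmx_trCmxK z : z 2%:R 0 = 0 -> Cmx R *m ((Cmx R)^T *m z) = z.
Proof.
move=> z2; apply/matrixP => i j; rewrite (ord1 j).
rewrite !(mxE, big_ord_recl, big_ord0) /= ?ord3_lift1 ?ord3_lift2.
by elim/ord3_ind: i => /=; rewrite ?mxE /= ?z2; ring.
Qed.

Lemma Cmx_tr_coupling p (a : R) (M : 'M[R]_(p, 3)) :
  Cmx R *m (- a *: (M *m hat (e3 R) *m Cmx R))^T = hat (a *: e3 R) *m M^T.
Proof.
apply/matrixP => i j; rewrite !hatE !(mxE, big_ord_recl, big_ord0) /=.
by elim/ord3_ind: i => /=; rewrite ?mxE /=; ring.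
Qed.

End Hat.

Section Linearization.
Variable R : realType.
Variables (n : nat) (m g : R) (ms l s : 'I_n -> R) (dx : R -> 'cV[R]_2)
  (xi dw : 'I_n -> R -> 'cV[R]_3) (du : R -> 'cV[R]_2).

(* First-order parts of the cart and link residuals at the equilibrium: [Z j]
   stands for xi_j and [Wd j] for the angular acceleration of link j. *)
Definition cart_lin (xdd : 'cV[R]_2) (Wd : 'I_n -> 'cV[R]_3) (u : 'cV[R]_2) :
    'cV[R]_2 :=
  M00 m ms *: xdd - \sum_(j < n) (M0 ms l j *m hat (s j *: e3 R) *m Wd j) - u.

Definition rot_lin i (xdd : 'cV[R]_2) (Z Wd : 'I_n -> 'cV[R]_3) : 'cV[R]_3 :=
  hat (s i *: e3 R) *m Mi0 ms l i *m xdd + Mij ms l i i *: Wd i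
  - \sum_(j < n | j != i)
      (Mij ms l i j *: (hat (s i *: e3 R) *m hat (s j *: e3 R) *m Wd j))
  - (Defs.msum ms i * g * l i) *: (hat (hat (Z i) *m (s i *: e3 R)) *m e3 R).

Lemma qpert0 i t : qpert s xi i 0 t = s i *: e3 R.
Proof. by rewrite /qpert expm_hat0 mul1mx. Qed.

Lemma is_derive_qpert0 i t :
  is_derive (0 : R) 1 (fun eps => qpert s xi i eps t) (hat (xi i t) *m (s i *: e3 R)).
Proof.
apply: is_derive_eq
  (is_derive_mulmx (is_derive_expm_hat0 (xi i t))
    (is_derive_cst (s i *: e3 R) (0 : R) (1 : R))) _.
by rewrite mulmx0 addr0.
Qed.

Lemma lin_cartE t :
  lin_cart m ms l s dx xi dw du t =
  cart_lin (derive1 (derive1 dx) t) (fun j => derive1 (dw j) t) (du t).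
Proof.
rewrite /lin_cart /cart_lin derive1E; apply: derive_val.
set xdd := derive1 (derive1 dx) t; set wd := fun j => derive1 (dw j) t.
have dhat j := is_derive_linear (@hat R) (is_derive_qpert0 j t).
apply: is_derive_eq (is_deriveB (is_deriveB
    (is_deriveZ (M00 m ms) (is_derive_scale xdd 0))
  (is_derive_sum_cond (P := xpredT) (fun j _ => is_derive_mulmx
     (is_derive_mulmx (is_derive_cst (M0 ms l j) (0 : R) (1 : R)) (dhat j))
     (is_derive_scale (wd j) 0))))
  (is_deriveD (is_derive_sum_cond (P := xpredT) (fun j _ => is_derive_scalemx
     (is_derive_sqnorm_scale0 (dw j t))
     (is_derive_mulmx (is_derive_cst (M0 ms l j) (0 : R) (1 : R)) (is_derive_qpert0 j t))))
   (is_derive_scale (du t) 0))) _.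
rewrite [X in _ - (X + _)]big1 ?add0r; last first.
  by move=> j _; rewrite sqnormZ expr0n mul0r !scale0r addr0.
by congr (_ - _ - _); apply: eq_bigr => j _; rewrite scale0r mulmx0 add0r qpert0.
Qed.

Lemma lin_rotE i t :
  lin_rot g ms l s dx xi dw i t =
  rot_lin i (derive1 (derive1 dx) t) (fun j => xi j t) (fun j => derive1 (dw j) t).
Proof.
rewrite /lin_rot /rot_lin derive1E; apply: derive_val.
set xdd := derive1 (derive1 dx) t; set wd := fun j => derive1 (dw j) t.
have dhat j := is_derive_linear (@hat R) (is_derive_qpert0 j t).
apply: is_derive_eq (is_deriveB (is_deriveB (is_deriveD
    (is_derive_mulmx
      (is_derive_mulmx (dhat i) (is_derive_cst (Mi0 ms l i) (0 : R) (1 : R)))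
      (is_derive_scale xdd 0))
    (is_deriveZ (Mij ms l i i) (is_derive_scale (wd i) 0)))
  (is_derive_sum_cond (P := fun j => j != i) (fun j _ => is_deriveZ (Mij ms l i j)
    (is_derive_mulmx (is_derive_mulmx (dhat i) (dhat j)) (is_derive_scale (wd j) 0)))))
  (is_deriveD (is_derive_sum_cond (P := fun j => j != i) (fun j _ => is_derive_scalemx
      (is_deriveZ (Mij ms l i j) (is_derive_sqnorm_scale0 (dw j t)))
      (is_derive_mulmx (dhat i) (is_derive_qpert0 j t))))
    (is_deriveZ (Defs.msum ms i * g * l i)
      (is_derive_mulmx (dhat i) (is_derive_cst (e3 R) (0 : R) (1 : R)))))) _.
rewrite [X in _ - (X + _)]big1 ?add0r; last first.
  by move=> j _; rewrite /= sqnormZ expr0n mul0r !scaler0 !scale0r addr0.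
rewrite /= !qpert0 !scale0r !mulmx0 !addr0 add0r.
by congr (_ - _ - _); apply: eq_bigr => j _; rewrite qpert0 scale0r mulmx0 add0r.
Qed.

Lemma rot_lin_block_row (s_sqr : forall i, s i * s i = 1) xdd
    (Z Zd : 'I_n -> 'cV[R]_3) (Z2 : forall j, Z j 2%:R 0 = 0)
    (Zd2 : forall j, Zd j 2%:R 0 = 0) i :
  rot_lin i xdd Z Zd =
  Cmx R *m ((- s i *: (M0 ms l i *m hat (e3 R) *m Cmx R))^T *m xdd
    + \sum_(j < n) ((s i * s j * Mij ms l i j)%:M *m ((Cmx R)^T *m Zd j))
    + (s i * Defs.msum ms i * g * l i)%:M *m ((Cmx R)^T *m Z i)).
Proof.
rewrite /rot_lin /Mi0 !mulmxDr mulmx_sumr [X in _ = X + _ + _]mulmxA Cmx_tr_coupling.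
under [in RHS]eq_bigr do rewrite mul_scalar_mx -scalemxAr (Cmx_trCmxK (Zd2 _)).
rewrite mul_scalar_mx -[Cmx R *m _]scalemxAr (Cmx_trCmxK (Z2 _)) hat_mul_hat_e3 //.
under [in LHS]eq_bigr do rewrite hat_e3_mul_hat_e3 ?Zd2 //.
rewrite [in RHS](bigD1 i) //= s_sqr mul1r.
rewrite [X in _ - X - _](eq_bigr (fun j => - ((s i * s j * Mij ms l i j) *: Zd j)));
  last first.
  by move=> j _; rewrite scalerA mulrN scaleNr mulrC.
rewrite sumrN opprK scalerA mulrN scaleNr opprK !addrA.
by congr (_ + _ *: _); rewrite mulrC !mulrA.
Qed.

Lemma linearized_block_form (s_sqr : forall i, s i * s i = 1) (xdd X u : 'cV[R]_2)
    (Z Zd : 'I_n -> 'cV[R]_3)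
    (Z2 : forall j, Z j 2%:R 0 = 0) (Zd2 : forall j, Zd j 2%:R 0 = 0) :
  (cart_lin xdd Zd u = 0 /\ forall i, rot_lin i xdd Z Zd = 0) <->
  Mbig m ms l s *m col_mx xdd (\mxcol_(i < n) ((Cmx R)^T *m Zd i))
    + Gbig g ms l s *m col_mx X (\mxcol_(i < n) ((Cmx R)^T *m Z i)) = Bbig R n *m u.
Proof.
rewrite /Mbig /Gbig /Bbig !mul_block_col mul_col_mx add_col_mx !mul0mx !addr0 add0r.
have -> : Mxx m ms *m xdd + Mxq ms l s *m (\mxcol_(i < n) ((Cmx R)^T *m Zd i)) =
    cart_lin xdd Zd 0.
  rewrite /cart_lin subr0 /Mxx mul_scalar_mx /Mxq mul_mxrow_mxcol -sumrN.
  congr (_ + _); apply: eq_bigr => j _.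
  rewrite -scalemxAl -mulmxA (Cmx_trCmxK (Zd2 _)) linearZ /= -scalemxAr.
  by rewrite -scalemxAl scaleNr -!scalemxAl.
set W := fun i => (- s i *: (M0 ms l i *m hat (e3 R) *m Cmx R))^T *m xdd
  + \sum_(j < n) ((s i * s j * Mij ms l i j)%:M *m ((Cmx R)^T *m Zd j))
  + (s i * Defs.msum ms i * g * l i)%:M *m ((Cmx R)^T *m Z i).
have -> : Mqx ms l s *m xdd + Mqq ms l s *m (\mxcol_(i < n) ((Cmx R)^T *m Zd i))
    + Gqq g ms l s *m (\mxcol_(i < n) ((Cmx R)^T *m Z i)) = \mxcol_(i < n) W i.
  rewrite /Mqx /Mxq tr_mxrow mxcol_mul /Mqq mxblockEv mxcol_mul.
  rewrite /Gqq mul_mxdiag_mxcol -!mxcolD; apply: eq_mxcol => i.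
  by rewrite mul_mxrow_mxcol.
rewrite mul1mx -(mxcol0 (p_ := fun _ : 'I_n => 2%N)).
have Cmx_inj (w : 'cV[R]_2) : Cmx R *m w = 0 -> w = 0.
  by move=> Cw; rewrite -[w]mul1mx -trCmx_Cmx -mulmxA Cw mulmx0.
have cart_linB : cart_lin xdd Zd u = cart_lin xdd Zd 0 - u.
  by rewrite /cart_lin subr0.
rewrite cart_linB; split.
- move=> [/eqP cart_eq0 rot_eq0]; congr col_mx; first by apply/eqP; rewrite -subr_eq0.
  apply/eq_mxcolP => i; apply: Cmx_inj.
  by rewrite -(rot_eq0 i) rot_lin_block_row.
- move=> /eq_col_mx [-> /eq_mxcolP rows_eq0]; split; first by rewrite subrr.
  by move=> i; rewrite rot_lin_block_row // -/(W i) rows_eq0 mulmx0.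
Qed.

Lemma dw_eq_derive_xi i t :
  s i != 0 -> (forall e, derivable (xi i) e 1) -> (forall e, xi i e 2%:R 0 = 0) ->
  dw i t 2%:R 0 = 0 -> lin_kin s xi dw i t -> dw i t = derive1 (xi i) t.
Proof.
move=> s_neq0 dxi xi2 dw2; rewrite /lin_kin.
have -> : (fun t' => derive1 (fun eps => qpert s xi i eps t') 0) =
    fun t' => hat (xi i t') *m (s i *: e3 R).
  by apply/funext => t'; rewrite derive1E; have [_ ->] := is_derive_qpert0 i t'.
have dxi_t := derivableP (dxi t).
rewrite !derive1E.
have [_ ->] := is_derive_mulmx (is_derive_linear (@hat R) dxi_t)
  (is_derive_cst (s i *: e3 R) t 1).
have [_ ->] := is_derive_mulmx (is_derive_linear (@hat R) (is_derive_scale (dw i t) 0))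
  (is_derive_qpert0 i t).
rewrite qpert0 mulmx0 addr0 scale0r linear0 mul0mx addr0 -derive1E => /eqP.
rewrite -subr_eq0 -mulmxBl -linearB /= -scalemxAr scaler_eq0 (negbTE s_neq0) /=.
move=> /eqP/hat_mul_e3_eq0; rewrite !mxE dw2 derive1_mx_entry_eq0 // subrr => /(_ erefl).
by move/eqP; rewrite subr_eq0 => /eqP.
Qed.

Lemma derive2_bx t :
  (forall e, derivable dx e 1) -> (forall e, derivable (derive1 dx) e 1) ->
  (forall i e, derivable (xi i) e 1) -> (forall i e, derivable (derive1 (xi i)) e 1) ->
  derive1 (derive1 (bx dx xi)) t =
  col_mx (derive1 (derive1 dx) t)
    (\mxcol_(i < n) ((Cmx R)^T *m derive1 (derive1 (xi i)) t)).
Proof.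
have derive1_bx (X : R -> 'cV[R]_2) (Y : 'I_n -> R -> 'cV[R]_3) t' :
    derivable X t' 1 -> (forall i, derivable (Y i) t' 1) ->
    derive1 (fun e => col_mx (X e) (\mxcol_(i < n) ((Cmx R)^T *m Y i e))) t' =
    col_mx (derive1 X t') (\mxcol_(i < n) ((Cmx R)^T *m derive1 (Y i) t')).
  move=> dX dY; rewrite !derive1E; apply: derive_val.
  apply: is_derive_col_mx (derivableP dX) _; apply: is_derive_mxcol => i.
  by rewrite derive1E; exact: (is_derive_linear (mulmx (Cmx R)^T) (derivableP (dY i))).
move=> ddx dddx dxi ddxi.
have -> : derive1 (bx dx xi) = fun t' =>
    col_mx (derive1 dx t') (\mxcol_(i < n) ((Cmx R)^T *m derive1 (xi i) t')).
  by apply/funext => t'; apply: derive1_bx.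
exact: derive1_bx.
Qed.

End Linearization.

Theorem proposition2 (R : realType) (n : nat) (m g : R) (ms l s : 'I_n -> R)
  (hm : 0 < m) (hg : 0 < g) (hms : forall i, 0 < ms i) (hl : forall i, 0 < l i)
  (hs : forall i, s i = 1 \/ s i = -1)
  (dx : R -> 'cV[R]_2) (xi dw : 'I_n -> R -> 'cV[R]_3) (du : R -> 'cV[R]_2)
  (hdx1 : forall t, derivable dx t 1)
  (hdx2 : forall t, derivable (derive1 dx) t 1)
  (hxi1 : forall i t, derivable (xi i) t 1)
  (hxi2 : forall i t, derivable (derive1 (xi i)) t 1)
  (hdw1 : forall i t, derivable (dw i) t 1)
  (hxie3 : forall i t, dotv (xi i t) (e3 R) = 0)
  (hdwe3 : forall i t, dotv (dw i t) (e3 R) = 0)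
  (hkin : forall i t, @lin_kin R n s xi dw i t) :
  (forall t, @lin_cart R n m ms l s dx xi dw du t = 0 /\
             forall i, @lin_rot R n g ms l s dx xi dw i t = 0)
  <->
  (forall t, @Mbig R n m ms l s *m derive1 (derive1 (@bx R n dx xi)) t
             + @Gbig R n g ms l s *m @bx R n dx xi t = @Bbig R n *m du t).
Proof.
have s_neq0 i : s i != 0 by case: (hs i) => ->; rewrite ?oppr_eq0 oner_eq0.
have s_sqr i : s i * s i = 1 by case: (hs i) => ->; rewrite ?mulrNN mulr1.
have xi2 i t : xi i t 2%:R 0 = 0 by rewrite -dotv_e3.
have xi''2 i t : derive1 (derive1 (xi i)) t 2%:R 0 = 0.
  by apply: derive1_mx_entry_eq0 => // e; apply: derive1_mx_entry_eq0.
have -> : dw = fun i => derive1 (xi i).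
  apply/funext => i; apply/funext => t.
  by apply: dw_eq_derive_xi; rewrite ?s_neq0 -?dotv_e3.
have block t := linearized_block_form m g ms l s_sqr (derive1 (derive1 dx) t) (dx t)
  (du t) (xi2^~ t) (xi''2^~ t).
split=> eqs t; move: (eqs t); rewrite derive2_bx // /bx.
- rewrite lin_cartE => -[cart_eq0 rot_eq0]; apply/block.
  by split=> // i; rewrite -lin_rotE.
- move=> /block [cart_eq0 rot_eq0].
  by rewrite lin_cartE; split=> // i; rewrite lin_rotE.
Qed.
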